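(* Let $1\le i_1<i_2<\dots<i_m\le n$, and let $H$ be a connected noncrossing graph on vertex set $[n]$ whose unique cycle is $C=(i_1,i_2,\dots,i_m)$ (with edges $\overline{i_1i_2},\dots,\overline{i_{m-1}i_m},\overline{i_mi_1}$). Let $T_1=H\setminus\overline{i_1i_m}$ and $T_j=H\setminus\overline{i_{j-1}i_j}$ for $1<j\le m$. Then in $\mathcal E_n$, \[x_{T_m}=x_{T_1}-x_{T_2}-x_{T_3}-\cdots-x_{T_{m-1}}.\]
   Context: The Fomin–Kirillov algebra $\mathcal E_n$ is the quadratic $\mathbf Q$-algebra with generators $x_{ij}=-x_{ji}$ for distinct $i,j\in[n]$, subject to: $x_{ij}^2=0$; $x_{ij}x_{kl}=x_{kl}x_{ij}$ for distinct $i,j,k,l$; $x_{ij}x_{jk}+x_{jk}x_{ki}+x_{ki}x_{ij}=0$ for distinct $i,j,k$. A graph on $[n]$ is noncrossing if it contains no two edges $\overline{ac},\overline{bd}$ with $a<b<c<d$. For a noncrossing tree $T$ on $[n]$ and a vertex $i$, order the edges $\overline{ij}$ of $T$ at $i$ according to the position of $j$ in the sequence $i-1,i-2,\dots,1,n,n-1,\dots,i+1$ (the clockwise order when vertices are drawn left to right on a line and edges as non-crossing arcs above it). For a noncrossing tree $T$, $x_T\in\mathcal E_n$ denotes the product $x_{a_1b_1}x_{a_2b_2}\cdots x_{a_{n-1}b_{n-1}}$ (with $a_k<b_k$) over the edges of $T$ taken in any order such that, for every vertex $i$, the edges at $i$ occur in the clockwise order just described; such orders exist and all such products are equal in $\mathcal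 E_n$. *)

From HB Require Import structures.
From mathcomp Require Import all_boot all_order all_algebra.
Set Implicit Arguments. Unset Strict Implicit. Unset Printing Implicit Defensive.
Import Order.TTheory GRing.Theory Num.Theory.

(* Vertices of [n] are encoded 0-based as 'I_n (vertex k+1 of the paper is
   the ordinal k).  An edge {a,b} with a<b is the pair (a,b). A graph on [n]
   is given by its edge set E : {set 'I_n * 'I_n}. *)

Section Graphs.
Variable n : nat.
Notation edge := ('I_n * 'I_n)%type.

Definition nedge (u v : 'I_n) : edge := if (u < v)%N then (u, v) else (v, u).

Definition wf_edges (E : {set edge}) : Prop := forall e, e \in E -> (e.1 < e.2)%N.

Definition noncrossing (E : {set edge}) : Prop :=
  forall e f, e \in E -> f \in E -> ~ [/\ (e.1 < f.1)%N, (f.1 < e.2)%N & (e.2 < f.2)%N].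

Definition adj (E : {set edge}) : rel 'I_n := fun u v => nedge u v \in E.

Definition connected (E : {set edge}) : Prop := forall u v, connect (adj E) u v.

Definition cyc_edges (c : seq 'I_n) : {set edge} :=
  [set nedge p.1 p.2 | p in zip c (rot 1 c)].

Definition is_cycle (E : {set edge}) (c : seq 'I_n) : Prop :=
  [/\ (3 <= size c)%N, uniq c & cyc_edges c \subset E].

(* the unique cycle of E is c: c is a cycle, and every cycle of E has the
   same edge set as c (i.e. is c up to rotation/reversal) *)
Definition unique_cycle (E : {set edge}) (c : seq 'I_n) : Prop :=
  is_cycle E c /\ forall c', is_cycle E c' -> cyc_edges c' = cyc_edges c.

Definition other (v : 'I_n) (e : edge) : 'I_n := if e.1 == v then e.2 else e.1.

Definition incident (v : 'I_n) (e : edge) : bool := (e.1 == v) || (e.2 == v).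

(* position of j in the sequence i-1, i-2, ..., 1, n, n-1, ..., i+1
   (clockwise order at i) *)
Definition cwpos (i j : 'I_n) : nat := ((i + n - j) %% n)%N.

Definition clockwise_order (T : {set edge}) (s : seq edge) : Prop :=
  perm_eq s (enum T) /\
  forall s1 e s2 f s3 (v : 'I_n), s = s1 ++ e :: s2 ++ f :: s3 ->
    incident v e -> incident v f -> (cwpos v (other v e) < cwpos v (other v f))%N.

End Graphs.

Definition xprod (n : nat) (A : algType rat) (x : 'I_n -> 'I_n -> A)
    (s : seq ('I_n * 'I_n)) : A :=
  (\prod_(e <- s) x e.1 e.2)%R.

From HB Require Import structures.
From mathcomp Require Import all_boot all_order all_algebra.
From mathcomp Require Import zify.
Set Implicit Arguments. Unset Strict Implicit. Unset Printing Implicit Defensive.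
Import GRing.Theory.

(* For every j, x_{T_j} factors as x_B * x_{C - e_j} * x_A.  Here the edges of H off
   the cycle C are split into the set B of those from which a chain of clockwise steps
   (consecutive edges sharing a vertex, the second one clockwise after the first) leads
   to C, and the set A of the others; B and A are listed as in an admissible order of
   T_1, and the path C - e_j is read from i_j around to i_{j-1}.  The concatenation is
   again an admissible order of T_j, because H is noncrossing and C is its only cycle:
   C has no chords, each cycle edge is a bridge of H - C, and a chain of clockwise steps
   leaving C from the outside of a cycle vertex can never come back to C.  Two
   admissible orders of the same edges give the same product, since edges that are
   incomparable for the clockwise order are disjoint and hence commute.
   This reduces the claim to an identity for the cycle alone: with y_l = x_{i_l i_(l+1)},
     x_{i_1 i_m} y_1 ... y_(m-2)
       = y_1 ... y_(m-1) - sum_(2 <= j < m) y_j ... y_(m-1) x_{i_1 i_m} y_1 ... y_(j-2),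
   which follows by induction from the three-term relation
   x_{i_1 i_k} y_k = x_{i_1 i_(k+1)} x_{i_1 i_k} + y_k x_{i_1 i_(k+1)}. *)

Lemma path_zip_rcons (T : Type) (r : rel T) y p z : path r y p -> r (last y p) z ->
  all (fun q => r q.1 q.2) (zip (y :: p) (rcons p z)).
Proof.
elim: p y => [|a p IH] y /=; first by rewrite andbT.
by move=> /andP[-> hp] hl; rewrite IH.
Qed.

Lemma last_map_iota (T : Type) (f : nat -> T) y a b :
  last y [seq f k | k <- iota a b.+1] = f (a + b).
Proof.
elim: b a y => [|b IH] a y /=; first by rewrite addn0.
by have := IH a.+1 (f a); rewrite /= => ->; rewrite addSnnS.
Qed.

Lemma pairwise_iota (r : rel nat) a b :
  (forall u v, (a <= u)%N -> (u < v)%N -> (v < a + b)%N -> r u v) -> pairwise r (iota a b).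
Proof.
elim: b a => [|b IH] a H //=; apply/andP; split.
  by apply/allP => v; rewrite mem_iota => hv; apply: H; lia.
by apply: IH => u v h1 h2 h3; apply: H; lia.
Qed.

Lemma prod_perm_pairwise (R : pzSemiRingType) (I : eqType) (r : rel I) (F : I -> R) s t :
  {in s &, forall a b, r a b -> r b a -> GRing.comm (F a) (F b)} ->
  perm_eq s t -> pairwise r s -> pairwise r t ->
  (\prod_(a <- s) F a = \prod_(a <- t) F a)%R.
Proof.
elim: s t => [|e s IH] t Fcomm st rs rt.
  by move: st; rewrite perm_sym => /perm_nilP ->.
have et : e \in t by rewrite -(perm_mem st) mem_head.
case/splitPr: et st rt => t1 t2.
move=> st; rewrite pairwise_cat pairwise_cons allrel_consr.
move=> /and3P[/andP[/allP rt1e rt1t2] rt1 /andP[_ rt2]].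
move: rs => /= /andP[/allP res rs].
have Fe_t1 : GRing.comm (F e) (\prod_(f <- t1) F f)%R.
  rewrite big_seq; apply: commr_prod => f ft1.
  have : f \in e :: s by rewrite (perm_mem st) mem_cat ft1.
  rewrite inE => /predU1P[-> //|fs].
  by apply: Fcomm; rewrite ?inE ?fs ?eqxx ?orbT //; [apply: res | apply: rt1e].
rewrite big_cat !big_cons /= mulrA -Fe_t1 -mulrA -big_cat; congr (_ * _)%R.
apply: IH => //; first by move=> a b a_s b_s; apply: Fcomm; rewrite inE ?a_s ?b_s orbT.
  by rewrite -(perm_cons e) (perm_trans st) // -cat1s perm_catCA.
by rewrite pairwise_cat rt1t2 rt1.
Qed.

Section ClockwiseOrder.
Variable n : nat.
Implicit Types (u v w y : 'I_n) (e f : 'I_n * 'I_n).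

Lemma cwposE v y : cwpos v y = if (y <= v)%N then (v - y)%N else (v + n - y)%N.
Proof.
rewrite /cwpos; case: leqP => h.
  have -> : (v + n - y = (v - y) + n)%N by lia.
  by rewrite modnDr modn_small //; have := ltn_ord v; lia.
by rewrite modn_small //; have := ltn_ord y; lia.
Qed.

Lemma cwpos_leq v y : (y <= v)%N -> cwpos v y = (v - y)%N.
Proof. by rewrite cwposE => ->. Qed.

Lemma cwpos_gtn v y : (v < y)%N -> cwpos v y = (v + n - y)%N.
Proof. by move=> vy; rewrite cwposE leqNgt vy. Qed.

Lemma cwpos_inj v : injective (cwpos v).
Proof.
move=> y y'; rewrite !cwposE => h; apply: val_inj => /=.
have := ltn_ord y; have := ltn_ord y'; have := ltn_ord v.
by move: h; case: (leqP y v); case: (leqP y' v); lia.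
Qed.

Lemma nedgeC u v : nedge u v = nedge v u.
Proof. by rewrite /nedge; case: (ltngtP u v) => // /val_inj ->. Qed.

Lemma nedge_other y e : (e.1 < e.2)%N -> incident y e ->
  e = nedge y (other y e) /\ other y e != y.
Proof.
case: e => a b /= ab; rewrite /incident /other /= => /orP[] /eqP <-; rewrite ?eqxx.
  by split; [rewrite /nedge ab | apply/eqP => /(congr1 val) /=; lia].
have -> : (a == b) = false by apply/eqP => /(congr1 val) /=; lia.
by split; [rewrite /nedge ltnNge (ltnW ab) | apply/eqP => /(congr1 val) /=; lia].
Qed.

Lemma other_fst u v : other u (u, v) = v.
Proof. by rewrite /other /= eqxx. Qed.

Lemma other_snd u v : u != v -> other v (u, v) = u.
Proof. by rewrite /other /= => /negbTE ->. Qed.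

Lemma incident_other y e : incident (other y e) e.
Proof. by rewrite /other; case: ifP => _; rewrite /incident eqxx ?orbT. Qed.

Lemma incident_endpoint u y e : incident u e -> incident y e -> y = u \/ y = other u e.
Proof.
case: e => a b; rewrite /incident /other /=.
by move=> /orP[] /eqP <- /orP[] /eqP <-; rewrite ?eqxx; auto; case: eqP; auto.
Qed.

Lemma cwpos_other_total u e f : (e.1 < e.2)%N -> (f.1 < f.2)%N ->
  incident u e -> incident u f -> e != f ->
  (cwpos u (other u e) < cwpos u (other u f))%N \/
  (cwpos u (other u f) < cwpos u (other u e))%N.
Proof.
move=> we wf ue uf; case: ltngtP => h; [by left | by right | move/cwpos_inj: h => h].
have [-> _] := nedge_other we ue; have [-> _] := nedge_other wf uf.
by rewrite h eqxx.
Qed.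

Definition cw_before e f : bool :=
  [forall v, incident v e ==> incident v f ==>
     (cwpos v (other v e) < cwpos v (other v f))%N].

Lemma cw_beforeP e f : reflect (forall v, incident v e -> incident v f ->
    (cwpos v (other v e) < cwpos v (other v f))%N) (cw_before e f).
Proof.
apply: (iffP forallP) => H v; first by move=> ve vf; have := H v; rewrite ve vf.
by apply/implyP => ve; apply/implyP; apply: H.
Qed.

Lemma clockwise_order_pairwise T s : clockwise_order T s -> pairwise cw_before s.
Proof.
case=> _; elim: s => [|e s IH] H //=; apply/andP; split.
  apply/allP => f fs; case/splitPr: fs H => s2 s3 H.
  by apply/cw_beforeP => v; apply: (H [::] e s2 f s3 v).
by apply: IH => s1 e' s2 f s3 v se; apply: (H (e :: s1)); rewrite se.
Qed.

Lemma cw_before_disjoint e f : (e.1 < e.2)%N -> (f.1 < f.2)%N ->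
  cw_before e f -> cw_before f e -> uniq [:: e.1; e.2; f.1; f.2].
Proof.
case: e => a b; case: f => c d /= ab cd /cw_beforeP ef /cw_beforeP fe.
have not_shared v : incident v (a, b) -> ~~ incident v (c, d).
  by move=> ve; apply/negP => vf; have := ltn_trans (ef v ve vf) (fe v vf ve); rewrite ltnn.
have /norP[ca da] := not_shared a (introT orP (or_introl (eqxx a))).
have /norP[cb db] := not_shared b (introT orP (or_intror (eqxx b))).
have neq (u w : 'I_n) : (u < w)%N -> u != w by apply: contraTneq => ->; rewrite ltnn.
by rewrite /= !inE !negb_or !(eq_sym a) !(eq_sym b) ca da cb db !neq.
Qed.

End ClockwiseOrder.

Section CommutingProducts.
Variables (n : nat) (A : algType rat) (x : 'I_n -> 'I_n -> A).
Hypothesis x_comm : forall i j k l : 'I_n, uniq [:: i; j; k; l] ->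
  (x i j * x k l = x k l * x i j)%R.

Implicit Types s t : seq ('I_n * 'I_n).

Lemma xprod_cat s t : xprod x (s ++ t) = (xprod x s * xprod x t)%R.
Proof. exact: big_cat. Qed.

Lemma xprod_perm_cw s t : all (fun e : 'I_n * 'I_n => e.1 < e.2)%N s -> perm_eq s t ->
  pairwise (@cw_before n) s -> pairwise (@cw_before n) t -> xprod x s = xprod x t.
Proof.
move=> /allP s_wf; apply: prod_perm_pairwise => e f es fs ef fe.
by apply: x_comm; apply: cw_before_disjoint; rewrite ?s_wf.
Qed.

End CommutingProducts.

(** * The cycle of H *)

Section Cycle.
Variables (n m : nat) (i : nat -> 'I_n).
Hypothesis i_lt : forall a b, (1 <= a)%N -> (a < b)%N -> (b <= m)%N -> (i a < i b)%N.
Variable E : {set 'I_n * 'I_n}.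
Hypotheses (E_wf : wf_edges E) (E_nc : noncrossing E).
Hypothesis E_cycle : unique_cycle E [seq i k | k <- iota 1 m].

Definition cyc_edge l := (i l, i l.+1).
Definition closing_edge := (i 1, i m).
Definition cycle_set := cyc_edges [seq i k | k <- iota 1 m].
Definition off_cycle := E :\: cycle_set.
Definition cnext k := if k == m then 1%N else k.+1.
Definition cprev k := if k == 1%N then m else k.-1.

Lemma m_ge3 : (3 <= m)%N.
Proof. by case: E_cycle => [[]]; rewrite size_map size_iota. Qed.

Lemma i_le a b : (1 <= a)%N -> (a <= b)%N -> (b <= m)%N -> (i a <= i b)%N.
Proof.
by move=> a1 ab bm; case: (ltngtP a b) ab => // [ab'|->] _; [exact/ltnW/i_lt|].
Qed.

Lemma i_inj a b : (1 <= a <= m)%N -> (1 <= b <= m)%N -> i a = i b -> a = b.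
Proof.
move=> /andP[a1 am] /andP[b1 bm] iab; case: (ltngtP a b) => // ab.
- by have := i_lt a1 ab bm; rewrite iab ltnn.
- by have := i_lt b1 ab am; rewrite iab ltnn.
Qed.

Lemma i_eq a b : (1 <= a <= m)%N -> (1 <= b <= m)%N -> (i a == i b) = (a == b).
Proof. by move=> ha hb; apply/eqP/eqP => [/(i_inj ha hb)|->]. Qed.

Lemma i_leE a b : (1 <= a <= m)%N -> (1 <= b <= m)%N -> (i a <= i b)%N = (a <= b)%N.
Proof.
move=> /andP[a1 am] /andP[b1 bm]; case: (leqP a b) => ab; first exact: i_le.
by apply/negbTE; rewrite -ltnNge; apply: i_lt.
Qed.

Lemma i_ltE a b : (1 <= a <= m)%N -> (1 <= b <= m)%N -> (i a < i b)%N = (a < b)%N.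
Proof. by move=> ha hb; rewrite !ltnNge i_leE. Qed.

Lemma map_i_uniq s : all (fun a => 1 <= a <= m)%N s -> uniq s -> uniq (map i s).
Proof. by move=> /allP hs; rewrite map_inj_in_uniq // => a b /hs ha /hs hb /i_inj; apply. Qed.

Lemma zip_map_iota a b y :
  zip [seq i k | k <- iota a b.+1] (rcons [seq i k | k <- iota a.+1 b] y) =
  rcons [seq (i l, i l.+1) | l <- iota a b] (i (a + b), y).
Proof.
elim: b a => [|b IH] a; first by rewrite addn0.
by rewrite [iota a _]/= [iota a.+1 _]/= /= IH addSnnS.
Qed.

Lemma nedge_cyc_edge l : (1 <= l < m)%N -> nedge (i l) (i l.+1) = cyc_edge l.
Proof. by move=> /andP[l1 lm]; rewrite /nedge i_lt. Qed.

Lemma nedge_closing : nedge (i m) (i 1) = closing_edge.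
Proof. by rewrite /nedge ltnNge ltnW //; apply: i_lt; have := m_ge3; lia. Qed.

Lemma cycle_setP e : reflect (e = closing_edge \/ exists2 l, (1 <= l < m)%N & e = cyc_edge l)
  (e \in cycle_set).
Proof.
have hm := m_ge3; have em : m = m.-1.+1 by lia.
rewrite /cycle_set /cyc_edges [in iota _ m]em.
have -> : rot 1 [seq i k | k <- iota 1 m.-1.+1] = rcons [seq i k | k <- iota 2 m.-1] (i 1).
  by rewrite /= rot1_cons.
rewrite zip_map_iota add1n -em; apply: (iffP imsetP).
- case=> p; rewrite mem_rcons inE => /orP[/eqP -> ->| /mapP[l]].
    by left; rewrite nedge_closing.
  rewrite mem_iota => hl -> ->; right; exists l; first by lia.
  by rewrite nedge_cyc_edge //; lia.
- case=> [->|[l hl ->]].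
    by exists (i m, i 1); rewrite ?nedge_closing // mem_rcons mem_head.
  exists (i l, i l.+1); last by rewrite nedge_cyc_edge.
  rewrite mem_rcons inE; apply/orP; right.
  by apply/mapP; exists l => //; rewrite mem_iota; lia.
Qed.

Lemma cycle_sub_E : cycle_set \subset E.
Proof. by case: E_cycle => [[]]. Qed.

Lemma cyc_edge_cycle l : (1 <= l < m)%N -> cyc_edge l \in cycle_set.
Proof. by move=> hl; apply/cycle_setP; right; exists l. Qed.

Lemma cyc_edge_E l : (1 <= l < m)%N -> cyc_edge l \in E.
Proof. by move/cyc_edge_cycle; apply: (subsetP cycle_sub_E). Qed.

Lemma closing_edge_E : closing_edge \in E.
Proof. by apply: (subsetP cycle_sub_E); apply/cycle_setP; left. Qed.

Lemma off_cycle_E e : e \in off_cycle -> e \in E.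
Proof. by rewrite inE => /andP[]. Qed.

Lemma off_cycle_notin_cycle e : e \in off_cycle -> e \notin cycle_set.
Proof. by rewrite inE => /andP[]. Qed.

Lemma cnext_range k : (1 <= k <= m)%N -> (1 <= cnext k <= m)%N.
Proof. by have := m_ge3; rewrite /cnext; case: (k =P m); lia. Qed.

Lemma cprev_range k : (1 <= k <= m)%N -> (1 <= cprev k <= m)%N.
Proof. by have := m_ge3; rewrite /cprev; case: (k =P 1%N); lia. Qed.

Lemma cnext_neq k : (1 <= k <= m)%N -> cnext k != k.
Proof. by have := m_ge3; rewrite /cnext; case: (k =P m); lia. Qed.

Lemma cprev_neq k : (1 <= k <= m)%N -> cprev k != k.
Proof. by have := m_ge3; rewrite /cprev; case: (k =P 1%N); lia. Qed.

Lemma nedge_cnext k : (1 <= k <= m)%N -> nedge (i k) (i (cnext k)) \in cycle_set.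
Proof.
move=> hk; apply/cycle_setP; rewrite /cnext; case: eqP => [->|km].
  by left; rewrite nedge_closing.
by right; exists k; rewrite ?nedge_cyc_edge //; lia.
Qed.

Lemma cwpos_cycle_le_next k l : (1 <= k <= m)%N -> (1 <= l <= m)%N -> l != k ->
  (cwpos (i k) (i l) <= cwpos (i k) (i (cnext k)))%N.
Proof.
move=> /andP[k1 km] /andP[l1 lm] lk; have hm := m_ge3; rewrite /cnext.
case: eqP => [ekm|nkm].
  subst k; have h1 : (l < m)%N by rewrite ltn_neqAle lk.
  have := i_lt l1 h1 (leqnn m); have := i_le (leqnn 1) l1 lm => a b.
  by rewrite !cwpos_leq; lia.
have km' : (k < m)%N by rewrite ltn_neqAle km andbT; apply/eqP.
have := ltn_ord (i k.+1); have := ltn_ord (i k) => o1 o2.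
have hk := i_lt k1 (ltnSn k) km'.
case: (ltngtP l k) => [lk'|lk'|/eqP]; last by rewrite (negbTE lk).
  by have := i_lt l1 lk' km => a; rewrite cwpos_leq ?cwpos_gtn //; lia.
have := @i_le k.+1 l isT lk' lm => a.
by rewrite (@cwpos_gtn _ _ (i l)) ?cwpos_gtn //; lia.
Qed.

Lemma cwpos_prev_lt_next k : (1 <= k <= m)%N ->
  (cwpos (i k) (i (cprev k)) < cwpos (i k) (i (cnext k)))%N.
Proof.
move=> /andP[k1 km]; have hm := m_ge3; rewrite /cprev /cnext.
have := ltn_ord (i 1); have := ltn_ord (i k); have := ltn_ord (i m) => o1 o2 o3.
case: (k =P m) => [ekm|nkm].
  subst k; rewrite (_ : m == 1 = false); last by apply/eqP; lia.
  have a : (i 1 < i m.-1)%N by apply: i_lt; lia.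
  have b : (i m.-1 < i m)%N by apply: i_lt; lia.
  by rewrite !cwpos_leq; lia.
have km' : (k < m)%N by rewrite ltn_neqAle km andbT; apply/eqP.
have hk := i_lt k1 (ltnSn k) km'.
case: (k =P 1%N) => [ek1|nk1].
  subst k; have a : (i 1 < i m)%N by apply: i_lt; lia.
  have b : (i 2 < i m)%N by apply: i_lt; lia.
  by rewrite !cwpos_gtn //; lia.
have a : (i k.-1 < i k)%N by apply: i_lt; lia.
by have := ltn_ord (i k.+1) => o4; rewrite cwpos_leq ?cwpos_gtn //; lia.
Qed.

Lemma no_other_cycle y p : path (adj E) y p -> uniq (y :: p) -> (2 <= size p)%N ->
  adj E (last y p) y -> nedge y (head y p) \in cycle_set.
Proof.
move=> yp yp_uniq p2 py.
have yp_cycle : is_cycle E (y :: p).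
  split => //; apply/subsetP => e /imsetP[q]; rewrite rot1_cons => qin ->.
  exact: (allP (path_zip_rcons yp py) q qin).
rewrite /cycle_set; case: E_cycle => _ /(_ _ yp_cycle) <-.
case: p {yp yp_uniq py yp_cycle} p2 => [|a p] //= _.
by rewrite /cyc_edges rot1_cons; apply/imsetP; exists (y, a); rewrite /= ?mem_head.
Qed.

Lemma path_cycle_arc a b : (1 <= a)%N -> (a + b <= m)%N ->
  path (adj E) (i a) [seq i k | k <- iota a.+1 b].
Proof.
elim: b a => [|b IH] a a1 abm //=; rewrite IH ?andbT; try lia.
by rewrite /adj nedge_cyc_edge ?cyc_edge_E //; lia.
Qed.

Lemma no_chord k l : (1 <= k <= m)%N -> (1 <= l <= m)%N ->
  nedge (i k) (i l) \in E -> nedge (i k) (i l) \in cycle_set.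
Proof.
have hm := m_ge3.
wlog kl : k l / (k <= l)%N.
  move=> H hk hl; case: (leqP k l) => [|/ltnW] kl; first exact: H.
  by rewrite nedgeC; apply: H.
move=> /andP[k1 km] /andP[l1 lm] klE.
have {}kl : (k < l)%N.
  rewrite ltn_neqAle kl andbT; apply: contraTneq klE => ->.
  by apply/negP => /E_wf; rewrite /nedge ltnn /= ltnn.
case: (l =P k.+1) => [->|lk1]; first by rewrite nedge_cyc_edge ?cyc_edge_cycle; lia.
have [b lkb] : exists b, l = (k + b.+2)%N by exists (l - k - 2); lia.
rewrite nedgeC; apply: (@no_other_cycle _ [seq i t | t <- iota k b.+2]).
- apply/andP; split; [by rewrite /adj nedgeC | apply: (@path_cycle_arc k b.+1); lia].
- apply: (@map_i_uniq (l :: iota k b.+2)).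
    by apply/allP => t; rewrite in_cons mem_iota => /orP[/eqP ->|]; lia.
  by rewrite cons_uniq iota_uniq mem_iota andbT; lia.
- by rewrite size_map size_iota.
- rewrite last_map_iota lkb [(k + b.+2)%N]addnS.
  by rewrite /adj /= nedge_cyc_edge ?cyc_edge_E; lia.
Qed.

Lemma off_cycle_no_chord k l : (1 <= k <= m)%N -> (1 <= l <= m)%N ->
  nedge (i k) (i l) \notin off_cycle.
Proof.
move=> hk hl; rewrite inE negb_and negbK.
by case klE: (_ \in E); rewrite ?orbT ?(no_chord hk hl klE).
Qed.

Lemma nedge_nested a b c d : (a, b) \in E -> nedge c d \in E ->
  (a < c < b)%N -> (a <= d <= b)%N.
Proof.
move=> abE cdE acb; rewrite leqNgt andbC leqNgt -negb_or; apply/negP => out.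
have := E_nc abE cdE; have := E_nc cdE abE; rewrite /nedge.
by case: (ltnP c d) => h /= H1 H2; [apply: H2 | apply: H1]; split => /=; lia.
Qed.

Lemma cwpos_noncrossing v p q r : nedge v q \in E -> nedge p r \in E ->
  p != v -> q != v -> r != v ->
  (cwpos v p < cwpos v q)%N -> (cwpos v q < cwpos v r)%N -> False.
Proof.
move=> vqE prE /eqP pv /eqP qv /eqP rv.
have [pv' qv' rv'] : [/\ (p : nat) <> v, (q : nat) <> v & (r : nat) <> v].
  by split=> /val_inj.
have := ltn_ord p; have := ltn_ord q; have := ltn_ord r; have := ltn_ord v.
rewrite !cwposE; case: (leqP q v) => hq o1 o2 o3 o4 h1 h2.
  have qvE : (q, v) \in E by move: vqE; rewrite /nedge ltnNge hq.
  have qpv : (q < p < v)%N by move: h1; case: (leqP p v); lia.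
  by have := nedge_nested qvE prE qpv; move: h2; case: (leqP r v); lia.
have vqE' : (v, q) \in E by move: vqE; rewrite /nedge hq.
have vrq : (v < r < q)%N by move: h2; case: (leqP r v); lia.
rewrite nedgeC in prE.
by have := nedge_nested vqE' prE vrq; move: h1; case: (leqP p v); lia.
Qed.

Lemma cycle_edge_bridge k : (1 <= k <= m)%N ->
  ~~ connect (adj off_cycle) (i k) (i (cnext k)).
Proof.
move=> hk; apply/negP => /connectP[p kp pk]; case: (shortenP kp) pk => p' kp' kp'_uniq _.
have k_next : i (cnext k) != i k by rewrite i_eq ?cnext_neq ?cnext_range.
have off_cyc u v : adj off_cycle u v -> nedge u v \notin cycle_set.
  exact: off_cycle_notin_cycle.
case: p' kp' kp'_uniq => [|a [|b p']] kp' kp'_uniq /= pk.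
- by rewrite pk eqxx in k_next.
- by move: kp'; rewrite /= andbT -pk => /off_cyc; rewrite nedge_cnext.
- have /andP[/off_cyc + _] := kp'; apply/negP/negPn.
  apply: (@no_other_cycle _ [:: a, b & p']) => //.
    by apply: sub_path kp' => u v /off_cycle_E.
  by rewrite /= -pk /adj nedgeC; apply: (subsetP cycle_sub_E); apply: nedge_cnext.
Qed.

Lemma cycle_gap w : (i 1 < w < i m)%N -> (forall l, (1 <= l <= m)%N -> (w : nat) != i l) ->
  exists2 l, (1 <= l < m)%N & (i l < w < i l.+1)%N.
Proof.
move=> /andP[w1 wm] w_cycle.
suff gap t : (1 <= t <= m)%N -> (w < i t)%N ->
    exists2 l, (1 <= l < t)%N & (i l < w < i l.+1)%N.
  by have [|l hl hl'] := gap m _ wm; [have := m_ge3; lia | exists l].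
elim: t => [|t IH] // ht wt; case: (posnP t) => [t0|t_pos]; first by subst t; lia.
case: (ltnP w (i t)) => wt'.
  by have [|l hl hl'] := IH _ wt'; [lia | exists l => //; lia].
by exists t => //; have := w_cycle t; lia.
Qed.

(* No edge of H leaves a cycle vertex into the angle between its two cycle
   neighbours, i.e. into the interior of C. *)
Lemma off_cycle_cwpos k w : (1 <= k <= m)%N -> nedge (i k) w \in off_cycle ->
  (cwpos (i k) (i (cprev k)) < cwpos (i k) w)%N ->
  (cwpos (i k) (i (cnext k)) < cwpos (i k) w)%N.
Proof.
move=> hk kw_off after_prev; rewrite ltnNge; apply/negP => hle.
have hm := m_ge3; have kwE := off_cycle_E kw_off.
have w_cycle l : (1 <= l <= m)%N -> (w : nat) != i l.
  move=> hl; apply/eqP => /val_inj wl.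
  by move: kw_off; rewrite wl; apply/negP/off_cycle_no_chord.
have before_next : (cwpos (i k) w < cwpos (i k) (i (cnext k)))%N.
  rewrite ltn_neqAle hle andbT; apply/eqP => /cwpos_inj/(congr1 val)/eqP.
  by apply/negP/w_cycle/cnext_range.
have := ltn_ord w => ow.
have i1m : (i 1 < i m)%N by apply: i_lt; lia.
have wim : (w : nat) != i m by apply: w_cycle; lia.
have wi1 : (w : nat) != i 1 by apply: w_cycle; lia.
case: (boolP ((i 1 < w) && (w < i m))%N) => w_in.
  have [l hl lwl] := cycle_gap w_in w_cycle; move: (lwl) => /andP[lw wl].
  rewrite nedgeC in kwE; have := nedge_nested (cyc_edge_E hl) kwE lwl.
  rewrite !i_leE; try lia; move=> /andP[lk kl]; case: (k =P l) => [kl'|nkl].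
    subst l; move: before_next; rewrite /cnext ifN; last by apply/eqP; lia.
    by rewrite !cwpos_gtn; lia.
  move: after_prev; have -> : k = l.+1 by lia.
  rewrite /cprev ifN; last by apply/eqP; lia.
  by rewrite /= !cwpos_leq; lia.
have {}w_in : (w < i 1)%N || (i m < w)%N by move: w_in; rewrite negb_and -!leqNgt; lia.
have k1m : (k == 1%N) || (k == m).
  apply/contraT; rewrite negb_or => /andP[/eqP k1 /eqP km].
  have /(nedge_nested closing_edge_E kwE) : (i 1 < i k < i m)%N by rewrite !i_ltE; lia.
  by move: w_in; rewrite /closing_edge /=; lia.
have := ltn_ord (i m); move: after_prev before_next; case/orP: k1m => /eqP -> + + om.
  move=> + _; rewrite /cprev eqxx !cwposE.
  by case: (leqP (i m) (i 1)); case: (leqP w (i 1)); lia.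
move=> _; rewrite /cnext eqxx !cwposE.
by case: (leqP (i 1) (i m)); case: (leqP w (i m)); lia.
Qed.

Lemma cycle_set_incident f u : f \in cycle_set -> incident u f ->
  exists2 k, (1 <= k <= m)%N &
    u = i k /\ (other u f = i (cnext k) \/ other u f = i (cprev k)).
Proof.
have hm := m_ge3; have ne a b : (1 <= a <= m)%N -> (1 <= b <= m)%N -> a != b -> i a != i b.
  by move=> ha hb; rewrite i_eq.
case/cycle_setP => [->|[l hl ->]]; rewrite /incident /other /=.
  all: move=> /orP[] /eqP <-; rewrite ?eqxx.
- by exists 1%N; [lia | split => //; right; rewrite /cprev eqxx].
- by exists m; [lia | split => //; left; rewrite /cnext eqxx ifN //; apply: ne; lia].
- by exists l; [lia | split => //; left; rewrite /cnext ifN //; apply/eqP; lia].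
- exists l.+1; [lia | split => //; right; rewrite /cprev ifN ?ne //=; try lia].
  by rewrite ifN //; apply/eqP; lia.
Qed.

(** * Clockwise steps away from the cycle *)

Definition cw_step : rel ('I_n * 'I_n) := fun e f =>
  [&& e \in off_cycle, f \in E & [exists v, [&& incident v e, incident v f &
     (cwpos v (other v e) < cwpos v (other v f))%N]]].

(* A chain of clockwise steps starting at i_k outside C stays in the sector of
   vertices clockwise beyond i_(cnext k) seen from i_k, and stays joined to i_k
   off C; since i_k i_(cnext k) is a bridge of H - C it never reaches C. *)
Section OuterRegion.
Variable k : nat.
Hypothesis k_range : (1 <= k <= m)%N.

Definition beyond_next u := (u == i k) || (cwpos (i k) (i (cnext k)) < cwpos (i k) u)%N.

Definition outer_edge e := (e \in off_cycle) &&
  [forall u, incident u e ==> beyond_next u && connect (adj off_cycle) (i k) u].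

Lemma beyond_next_cycle l : (1 <= l <= m)%N -> beyond_next (i l) -> l = k.
Proof.
move=> hl; rewrite /beyond_next i_eq //; case: (l =P k) => //= /eqP lk.
by rewrite ltnNge cwpos_cycle_le_next.
Qed.

Lemma outer_step_not_cycle e f : outer_edge e -> cw_step e f -> f \notin cycle_set.
Proof.
move=> /andP[e_off /forallP e_outer] /and3P[_ fE /existsP[u /and3P[ue uf ef]]].
apply/negP => /cycle_set_incident/(_ uf) [l hl [ul f_other]].
have /andP[u_beyond _] := implyP (e_outer u) ue.
have /andP[w_beyond _] := implyP (e_outer (other u e)) (incident_other u e).
have [_ wu] := nedge_other (E_wf (off_cycle_E e_off)) ue.
have lk : l = k by apply: beyond_next_cycle; rewrite -?ul.
subst u l; move: w_beyond; rewrite /beyond_next (negbTE wu) /= => w_beyond.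
have : (cwpos (i k) (other (i k) f) <= cwpos (i k) (i (cnext k)))%N.
  case: f_other => ->; first by [].
  by apply: cwpos_cycle_le_next; rewrite ?cprev_range ?cprev_neq.
by move: ef; lia.
Qed.

Lemma beyond_next_adj u w : u != i k -> beyond_next u -> nedge u w \in E ->
  w != i (cnext k) -> beyond_next w.
Proof.
move=> uk; rewrite /beyond_next (negbTE uk) /= => u_beyond uwE w_next.
case: eqP => //= /eqP wk; rewrite ltnNge; apply/negP => w_le.
apply: (@cwpos_noncrossing (i k) w (i (cnext k)) u) => //.
- by apply: (subsetP cycle_sub_E); apply: nedge_cnext.
- by rewrite nedgeC.
- by rewrite i_eq ?cnext_range ?cnext_neq.
- by rewrite ltn_neqAle w_le andbT; apply: contra w_next => /eqP/cwpos_inj ->.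
Qed.

Lemma outer_edge_step e f : outer_edge e -> cw_step e f -> outer_edge f.
Proof.
move=> e_outer ef; have f_not_cycle := outer_step_not_cycle e_outer ef.
move: e_outer ef => /andP[e_off /forallP e_outer] /and3P[_ fE /existsP[u /and3P[ue uf ef]]].
rewrite /outer_edge inE f_not_cycle fE; apply/forallP => y; apply/implyP => yf.
have /andP[u_beyond k_u] := implyP (e_outer u) ue.
case: (incident_endpoint uf yf) => ->; first by rewrite u_beyond k_u.
have [f_uw _] := nedge_other (E_wf fE) uf.
have k_w : connect (adj off_cycle) (i k) (other u f).
  by apply: (connect_trans k_u); apply: connect1; rewrite /adj -f_uw inE f_not_cycle fE.
rewrite k_w andbT; have [uk|uk] := eqVneq u (i k).
  have /andP[w_beyond _] := implyP (e_outer (other u e)) (incident_other u e).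
  have [_ wu] := nedge_other (E_wf (off_cycle_E e_off)) ue; subst u.
  move: w_beyond; rewrite /beyond_next (negbTE wu) /= => w_beyond.
  by apply/orP; right; apply: ltn_trans w_beyond ef.
apply: beyond_next_adj uk u_beyond _ _; first by rewrite -f_uw.
by apply: contraNneq (cycle_edge_bridge k_range) => <-.
Qed.

Lemma outer_edge_connect e f : outer_edge e -> connect cw_step e f -> outer_edge f.
Proof.
move=> e_outer /connectP[p ep ->]; elim: p e e_outer ep => //= g p IH e e_outer.
by case/andP=> eg gp; apply: IH gp; apply: outer_edge_step eg.
Qed.

End OuterRegion.

Lemma cw_step_no_return c d u c' : c \in cycle_set -> d \in off_cycle ->
  incident u c -> incident u d -> (cwpos u (other u c) < cwpos u (other u d))%N ->
  connect cw_step d c' -> c' \notin cycle_set.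
Proof.
move=> cC dD uc ud cd dc'.
have [k hk [uk c_other]] := cycle_set_incident cC uc; subst u.
have [d_kw wk] := nedge_other (E_wf (off_cycle_E dD)) ud.
suff d_outer : outer_edge k d.
  by have /andP[/off_cycle_notin_cycle] := outer_edge_connect hk d_outer dc'.
rewrite /outer_edge dD; apply/forallP => y; apply/implyP => yd.
case: (incident_endpoint ud yd) => ->; first by rewrite /beyond_next eqxx connect0.
apply/andP; split; last by apply: connect1; rewrite /adj -d_kw.
apply/orP; right; case: c_other => c_other; rewrite c_other in cd; first by [].
by apply: off_cycle_cwpos; rewrite // -d_kw.
Qed.

Definition before_cycle :=
  [set d in off_cycle | [exists c in cycle_set, connect cw_step d c]].
Definition after_cycle := off_cycle :\: before_cycle.

Lemma before_cycle_off e : e \in before_cycle -> e \in off_cycle.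
Proof. by rewrite inE => /andP[]. Qed.

Lemma after_cycle_off e : e \in after_cycle -> e \in off_cycle.
Proof. by rewrite inE => /andP[]. Qed.

Lemma after_cycle_before e : e \in after_cycle -> e \notin before_cycle.
Proof. by rewrite inE => /andP[]. Qed.

Lemma mem_E_split e :
  (e \in E) = [|| e \in before_cycle, e \in cycle_set | e \in after_cycle].
Proof.
case eC: (e \in cycle_set); first by rewrite orbT (subsetP cycle_sub_E).
rewrite /after_cycle in_setD /off_cycle in_setD eC /=.
by case eB: (e \in before_cycle) => //=; move/before_cycle_off: eB; rewrite in_setD eC.
Qed.

Lemma cw_before_before_cycle b c : b \in before_cycle -> c \in cycle_set -> cw_before b c.
Proof.
rewrite inE => /andP[bD /exists_inP[c' c'C bc']] cC; apply/cw_beforeP => u ub uc.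
have cE := subsetP cycle_sub_E _ cC.
have bc : b != c by apply: contraTneq cC => <-; exact: off_cycle_notin_cycle.
have [//|cb] := cwpos_other_total (E_wf (off_cycle_E bD)) (E_wf cE) ub uc bc.
by have := cw_step_no_return cC bD uc ub cb bc'; rewrite c'C.
Qed.

Lemma cw_before_cycle_after c a : c \in cycle_set -> a \in after_cycle -> cw_before c a.
Proof.
move=> cC; rewrite in_setD => /andP[aB aD]; apply/cw_beforeP => u uc ua.
have cE := subsetP cycle_sub_E _ cC.
have ac : a != c by apply: contraTneq cC => <-; exact: off_cycle_notin_cycle.
have [ac_ord|//] := cwpos_other_total (E_wf (off_cycle_E aD)) (E_wf cE) ua uc ac.
suff : a \in before_cycle by rewrite (negbTE aB).
rewrite inE aD; apply/exists_inP; exists c => //.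
by apply: connect1; rewrite /cw_step aD cE; apply/existsP; exists u; rewrite ua uc ac_ord.
Qed.

Lemma cw_before_before_after b a : b \in before_cycle -> a \in after_cycle -> cw_before b a.
Proof.
move=> bB; rewrite in_setD => /andP[aB aD]; apply/cw_beforeP => u ub ua.
have bD : b \in off_cycle by move: bB; rewrite inE => /andP[].
have ab : a != b by apply: contraNneq aB => ->.
have [ab_ord|//] := cwpos_other_total (E_wf (off_cycle_E aD)) (E_wf (off_cycle_E bD)) ua ub ab.
suff : a \in before_cycle by rewrite (negbTE aB).
rewrite inE aD.
move: bB; rewrite inE => /andP[_ /exists_inP[c cC bc]]; apply/exists_inP; exists c => //.
apply: connect_trans bc; apply: connect1; rewrite /cw_step aD (off_cycle_E bD).
by apply/existsP; exists u; rewrite ua ub ab_ord.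
Qed.

Lemma cw_before_cyc_edges l l' : (1 <= l < m)%N -> (1 <= l' < m)%N ->
  l != l' -> l != l'.+1 -> cw_before (cyc_edge l) (cyc_edge l').
Proof.
move=> hl hl' ll' ll'1; apply/cw_beforeP => u; rewrite /incident /=.
case/orP => /eqP <-; rewrite !i_eq; try lia.
case/orP => /eqP el; last by exfalso; lia.
subst l'; rewrite other_snd ?other_fst; last by rewrite i_eq; lia.
have /cwpos_prev_lt_next : (1 <= l.+1 <= m)%N by lia.
by rewrite /cprev /cnext !ifN //=; apply/eqP; lia.
Qed.

Lemma cw_before_cyc_closing l : (1 < l < m)%N -> cw_before (cyc_edge l) closing_edge.
Proof.
move=> hl; have hm := m_ge3; apply/cw_beforeP => u; rewrite /incident /=.
case/orP => /eqP <-; rewrite !i_eq; try lia.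
case/orP => /eqP el; first by exfalso; lia.
have -> : l = m.-1 by lia.
rewrite /cyc_edge /closing_edge (_ : m.-1.+1 = m); last by lia.
rewrite !other_snd ?i_eq; try lia.
have /cwpos_prev_lt_next : (1 <= m <= m)%N by lia.
by rewrite /cprev /cnext eqxx ifN //; apply/eqP; lia.
Qed.

Lemma cw_before_closing_cyc l : (1 <= l < m.-1)%N -> cw_before closing_edge (cyc_edge l).
Proof.
move=> hl; have hm := m_ge3; apply/cw_beforeP => u; rewrite /incident /=.
case/orP => /eqP <-; rewrite !i_eq; try lia.
case/orP => /eqP el; last by exfalso; lia.
subst l; rewrite !other_fst.
have /cwpos_prev_lt_next : (1 <= 1 <= m)%N by lia.
by rewrite /cprev /cnext eqxx ifN //; apply/eqP; lia.
Qed.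

Definition cycle_order j :=
  if j == 1%N then [seq cyc_edge l | l <- iota 1 m.-1]
  else [seq cyc_edge l | l <- iota j (m - j)] ++
       closing_edge :: [seq cyc_edge l | l <- iota 1 (j - 2)].

Definition removed_edge j := if j == 1%N then closing_edge else cyc_edge j.-1.

Lemma cyc_edge_inj l l' : (1 <= l < m)%N -> (1 <= l' < m)%N ->
  cyc_edge l = cyc_edge l' -> l = l'.
Proof. by move=> hl hl' [/i_inj ll' _]; apply: ll'; lia. Qed.

Lemma cyc_edge_neq_closing l : (1 <= l < m)%N -> cyc_edge l != closing_edge.
Proof.
move=> hl; have hm := m_ge3; apply/eqP => -[/i_inj l1 /i_inj lm].
by have := l1 _ _; have := lm _ _; lia.
Qed.

Lemma mem_cyc_edges a b l : (1 <= a)%N -> (a + b <= m)%N -> (1 <= l < m)%N ->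
  (cyc_edge l \in [seq cyc_edge k | k <- iota a b]) = (a <= l < a + b)%N.
Proof.
move=> ha hab hl; apply/mapP/idP => [[l' hl' /cyc_edge_inj e]|h].
  by move: hl'; rewrite mem_iota => hl'; rewrite e //; lia.
by exists l => //; rewrite mem_iota.
Qed.

Lemma uniq_cyc_edges a b : (1 <= a)%N -> (a + b <= m)%N ->
  uniq [seq cyc_edge k | k <- iota a b].
Proof.
move=> ha hab; rewrite map_inj_in_uniq ?iota_uniq // => u v.
by rewrite !mem_iota => hu hv; apply: cyc_edge_inj; lia.
Qed.

Lemma closing_notin_cyc_edges a b : (1 <= a)%N -> (a + b <= m)%N ->
  closing_edge \notin [seq cyc_edge k | k <- iota a b].
Proof.
move=> ha hab; apply/mapP => -[l]; rewrite mem_iota => hl /eqP; rewrite eq_sym.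
by apply/negP; apply: cyc_edge_neq_closing; lia.
Qed.

Lemma mem_cycle_order j e : (1 <= j <= m)%N ->
  (e \in cycle_order j) = (e \in cycle_set) && (e != removed_edge j).
Proof.
move=> hj; have hm := m_ge3; rewrite /cycle_order /removed_edge.
case: (j =P 1%N) => [_|j1].
  apply/mapP/andP => [[l hl ->]|[/cycle_setP [->|[l hl ->]] hne]].
  - move: hl; rewrite mem_iota => hl; split; first by apply: cyc_edge_cycle; lia.
    by rewrite cyc_edge_neq_closing //; lia.
  - by rewrite eqxx in hne.
  - by exists l => //; rewrite mem_iota; lia.
rewrite mem_cat inE; apply/idP/andP.
  case/or3P => [/mapP[l hl ->]|/eqP ->|/mapP[l hl ->]].
  - move: hl; rewrite mem_iota => hl; split; first by apply: cyc_edge_cycle; lia.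
    by apply/eqP => /cyc_edge_inj; lia.
  - by split; [apply/cycle_setP; left | rewrite eq_sym cyc_edge_neq_closing //; lia].
  - move: hl; rewrite mem_iota => hl; split; first by apply: cyc_edge_cycle; lia.
    by apply/eqP => /cyc_edge_inj; lia.
case=> /cycle_setP [->|[l hl ->]] hne; first by rewrite eqxx orbT.
have hne' : l != j.-1 by apply: contra hne => /eqP ->.
case: (leqP j l) => hjl; first by rewrite mem_cyc_edges //; lia.
by rewrite (@mem_cyc_edges 1 (j - 2)) //; lia.
Qed.

Lemma uniq_cycle_order j : (1 <= j <= m)%N -> uniq (cycle_order j).
Proof.
move=> hj; have hm := m_ge3; rewrite /cycle_order.
case: (j =P 1%N) => [_|j1]; first by apply: uniq_cyc_edges; lia.
rewrite cat_uniq cons_uniq /= negb_or !closing_notin_cyc_edges ?uniq_cyc_edges //=;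
  try lia.
rewrite andbT; apply/hasPn => e /mapP[l]; rewrite mem_iota => hl ->.
by rewrite mem_cyc_edges; lia.
Qed.

Lemma pairwise_cycle_order j : (1 <= j <= m)%N -> pairwise (@cw_before n) (cycle_order j).
Proof.
move=> hj; have hm := m_ge3; rewrite /cycle_order.
have pw a b : (1 <= a)%N -> (a + b <= m)%N ->
    pairwise (@cw_before n) [seq cyc_edge l | l <- iota a b].
  move=> ha hab; rewrite pairwise_map; apply: pairwise_iota => u v *.
  by apply: cw_before_cyc_edges; lia.
case: (j =P 1%N) => [_|j1]; first by apply: pw; lia.
rewrite pairwise_cat pairwise_cons !pw ?andbT //; try lia.
apply/andP; split.
  apply/allrelP => e e' /mapP[l]; rewrite mem_iota => hl -> /[!inE].
  case/orP => [/eqP ->|/mapP[l' hl' ->]]; first by apply: cw_before_cyc_closing; lia.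
  by move: hl'; rewrite mem_iota => hl'; apply: cw_before_cyc_edges; lia.
by apply/allP => e /mapP[l]; rewrite mem_iota => hl ->; apply: cw_before_closing_cyc; lia.
Qed.

End Cycle.

(** * The cycle identity *)

Section CycleAlgebra.
Local Open Scope ring_scope.
Variables (n : nat) (A : algType rat) (x : 'I_n -> 'I_n -> A).
Hypothesis x_anti : forall i j : 'I_n, i != j -> x i j = - x j i.
Hypothesis x_comm : forall i j k l : 'I_n, uniq [:: i; j; k; l] ->
  x i j * x k l = x k l * x i j.
Hypothesis x_tri : forall i j k : 'I_n, uniq [:: i; j; k] ->
  x i j * x j k + x j k * x k i + x k i * x i j = 0.
Variables (m : nat) (i : nat -> 'I_n).
Hypothesis i_lt : forall a b, (1 <= a)%N -> (a < b)%N -> (b <= m)%N -> (i a < i b)%N.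

Definition xcyc l := x (i l) (i l.+1).
Definition xchord k := x (i 1) (i k).
Definition xpath a b := \prod_(a <= l < b) xcyc l.

Lemma xpath_nil a : xpath a a = 1.
Proof. by rewrite /xpath big_geq. Qed.

Lemma xpath_recr a b : (a <= b)%N -> xpath a b.+1 = xpath a b * xcyc b.
Proof. exact: big_nat_recr. Qed.

Lemma comm_xpath z a b : (forall l, (a <= l < b)%N -> GRing.comm z (xcyc l)) ->
  GRing.comm z (xpath a b).
Proof. by move=> zc; rewrite /xpath big_nat_cond; apply: commr_prod => l /andP[/zc]. Qed.

Lemma xchord_xcyc k : (2 <= k < m)%N ->
  xchord k * xcyc k = xchord k.+1 * xchord k + xcyc k * xchord k.+1.
Proof.
move=> hk; have /x_tri : uniq [:: i 1; i k; i k.+1].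
  by apply: (map_i_uniq i_lt (s := [:: 1; k; k.+1]%N)) => /=; rewrite ?inE; lia.
rewrite (@x_anti (i k.+1)) ?mulrN ?mulNr => [/subr0_eq|].
  by move/eqP; rewrite subr_eq => /eqP.
by rewrite (i_eq i_lt); lia.
Qed.

Lemma xpath_sum t : (t.+2 <= m)%N ->
  \sum_(2 <= j < t.+3) xpath j t.+2 * xchord t.+2 * xpath 1 j.-1 = xpath 1 t.+2.
Proof.
elim: t => [_|t IH]; first by rewrite big_nat1 !xpath_nil mul1r mulr1 /xpath big_nat1.
set k := t.+2 in IH *; move=> km.
have term j : (2 <= j < k.+1)%N ->
    xpath j k * xchord k * xpath 1 j.-1 * xcyc k =
    xchord k.+1 * (xpath j k * xchord k * xpath 1 j.-1) +
    xpath j k.+1 * xchord k.+1 * xpath 1 j.-1.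
  move=> hj.
  have yc : GRing.comm (xcyc k) (xpath 1 j.-1).
    apply: comm_xpath => l hl; apply: x_comm.
    by apply: (map_i_uniq i_lt (s := [:: k; k.+1; l; l.+1]%N)) => /=; rewrite ?inE; lia.
  have wc : GRing.comm (xchord k.+1) (xpath j k).
    apply: comm_xpath => l hl; apply: x_comm.
    by apply: (map_i_uniq i_lt (s := [:: 1; k.+1; l; l.+1]%N)) => /=; rewrite ?inE; lia.
  rewrite -mulrA -yc mulrA -(mulrA _ (xchord k)) xchord_xcyc; last by lia.
  by rewrite mulrDr mulrDl !mulrA -wc [xpath j k.+1]xpath_recr //; lia.
have {}IH := IH (ltnW km).
rewrite [xpath 1 k.+1]xpath_recr // -{1}IH mulr_suml (eq_big_nat _ _ term) big_split /=.
by rewrite -mulr_sumr IH [LHS]big_nat_recr //= xpath_nil mul1r addrC.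
Qed.

Lemma xchord_xpath_identity : (3 <= m)%N ->
  xchord m * xpath 1 m.-1 = xpath 1 m - \sum_(2 <= j < m) xpath j m * xchord m * xpath 1 j.-1.
Proof.
move=> hm; have := @xpath_sum (m - 2); rewrite (_ : (m - 2).+2 = m); last by lia.
move=> /(_ (leqnn m)); rewrite big_nat_recr /=; last by lia.
by rewrite xpath_nil mul1r => <-; rewrite addrAC subrr add0r.
Qed.

Lemma xprod_cyc_edges a b : xprod x [seq cyc_edge i l | l <- iota a b] = xpath a (a + b).
Proof. by rewrite /xprod big_map /xpath /index_iota addKn. Qed.

Lemma xprod_cycle_order1 : (0 < m)%N -> xprod x (cycle_order m i 1) = xpath 1 m.
Proof. by move=> m0; rewrite /cycle_order eqxx xprod_cyc_edges add1n prednK. Qed.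

Lemma xprod_cycle_order j : (2 <= j <= m)%N ->
  xprod x (cycle_order m i j) = xpath j m * xchord m * xpath 1 j.-1.
Proof.
move=> hj; rewrite /cycle_order ifN; last by apply/eqP; lia.
rewrite xprod_cat /xprod big_cons -!/(xprod _ _) !xprod_cyc_edges mulrA.
by rewrite subnKC 1?(_ : (1 + (j - 2))%N = j.-1) //; lia.
Qed.

End CycleAlgebra.

(** * Factorization of x_{T_j} *)

Section Factorization.
Local Open Scope ring_scope.
Variables (n : nat) (A : algType rat) (x : 'I_n -> 'I_n -> A).
Hypothesis x_comm : forall i j k l : 'I_n, uniq [:: i; j; k; l] ->
  x i j * x k l = x k l * x i j.
Variables (m : nat) (i : nat -> 'I_n).
Hypothesis i_lt : forall a b, (1 <= a)%N -> (a < b)%N -> (b <= m)%N -> (i a < i b)%N.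
Variable E : {set 'I_n * 'I_n}.
Hypotheses (E_wf : wf_edges E) (E_nc : noncrossing E).
Hypothesis E_cycle : unique_cycle E [seq i k | k <- iota 1 m].
Variable s : nat -> seq ('I_n * 'I_n).
Hypothesis s_order : forall j, (1 <= j)%N -> (j <= m)%N ->
  clockwise_order
    (E :\ (if j == 1%N then nedge (i 1%N) (i m) else nedge (i j.-1) (i j))) (s j).

Definition before_seq := [seq e <- s 1 | e \in before_cycle m i E].
Definition after_seq := [seq e <- s 1 | e \in after_cycle m i E].
Definition ordered_seq j := before_seq ++ cycle_order m i j ++ after_seq.

Lemma removed_edgeE j : (1 <= j <= m)%N ->
  (if j == 1%N then nedge (i 1%N) (i m) else nedge (i j.-1) (i j)) = removed_edge m i j.
Proof.
move=> hj; have hm := m_ge3 E_cycle; rewrite /removed_edge; case: eqP => [_|j1].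
  by rewrite nedgeC (nedge_closing i_lt E_cycle).
by rewrite -{2}(_ : j.-1.+1 = j) ?(nedge_cyc_edge i_lt) //; lia.
Qed.

Lemma removed_edge_cycle j : (1 <= j <= m)%N -> removed_edge m i j \in cycle_set m i.
Proof.
move=> hj; have hm := m_ge3 E_cycle; rewrite /removed_edge; case: eqP => [_|j1].
  by apply/(cycle_setP i_lt E_cycle); left.
by apply: (cyc_edge_cycle i_lt E_cycle); lia.
Qed.

Lemma off_cycle_removed j e : (1 <= j <= m)%N -> e \in off_cycle m i E ->
  e != removed_edge m i j.
Proof.
move=> hj /off_cycle_notin_cycle; apply: contraNneq => ->; exact: removed_edge_cycle.
Qed.

Lemma mem_s j e : (1 <= j <= m)%N -> (e \in s j) = (e \in E) && (e != removed_edge m i j).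
Proof.
move=> /[dup] hj /andP[j1 jm]; have [s_perm _] := s_order j1 jm.
by rewrite (perm_mem s_perm) mem_enum removed_edgeE // !inE andbC.
Qed.

Lemma uniq_s j : (1 <= j <= m)%N -> uniq (s j).
Proof. by case/andP=> j1 jm; have [/perm_uniq -> _] := s_order j1 jm; apply: enum_uniq. Qed.

Lemma mem_before_seq e : (e \in before_seq) = (e \in before_cycle m i E).
Proof.
rewrite mem_filter andb_idr // => eB; have hm := m_ge3 E_cycle.
rewrite mem_s ?(mem_E_split E_cycle) ?eB /=; last by lia.
by rewrite off_cycle_removed ?before_cycle_off //; lia.
Qed.

Lemma mem_after_seq e : (e \in after_seq) = (e \in after_cycle m i E).
Proof.
rewrite mem_filter andb_idr // => eA; have hm := m_ge3 E_cycle.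
rewrite mem_s ?(mem_E_split E_cycle) ?eA ?orbT /=; last by lia.
by rewrite off_cycle_removed ?after_cycle_off //; lia.
Qed.

Lemma uniq_ordered_seq j : (1 <= j <= m)%N -> uniq (ordered_seq j).
Proof.
move=> hj; have s1 : (1 <= 1 <= m)%N by have := m_ge3 E_cycle; lia.
rewrite /ordered_seq !cat_uniq (uniq_cycle_order i_lt E_cycle) // !filter_uniq ?uniq_s //=.
rewrite has_cat negb_or !andbT -andbA; apply/and3P; split; apply/hasPn => e.
- rewrite (mem_cycle_order i_lt E_cycle) // mem_before_seq => /andP[eC _].
  by apply: contraTN eC => /before_cycle_off/off_cycle_notin_cycle.
- by rewrite mem_after_seq mem_before_seq => /after_cycle_before.
- rewrite mem_after_seq (mem_cycle_order i_lt E_cycle) //.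
  by move=> /after_cycle_off/off_cycle_notin_cycle; apply: contraNN => /andP[].
Qed.

Lemma perm_ordered_seq j : (1 <= j <= m)%N -> perm_eq (s j) (ordered_seq j).
Proof.
move=> hj; apply: uniq_perm; rewrite ?uniq_s ?uniq_ordered_seq // => e.
rewrite mem_s // (mem_E_split E_cycle) !mem_cat mem_before_seq mem_after_seq.
rewrite (mem_cycle_order i_lt E_cycle) //.
have [eB|_] := boolP (e \in before_cycle m i E).
  by rewrite /= off_cycle_removed ?before_cycle_off.
have [eA|_] := boolP (e \in after_cycle m i E).
  by rewrite !orbT /= off_cycle_removed ?after_cycle_off.
by rewrite !orbF.
Qed.

Lemma pairwise_ordered_seq j : (1 <= j <= m)%N -> pairwise (@cw_before n) (ordered_seq j).
Proof.
move=> hj; have s1 : (1 <= 1 <= m)%N by have := m_ge3 E_cycle; lia.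
have /clockwise_order_pairwise s1_pw := s_order (leqnn 1) (andP s1).2.
rewrite /ordered_seq !pairwise_cat allrel_catr (pairwise_cycle_order i_lt E_cycle) //.
rewrite !pairwise_filter //= andbT -andbA; apply/and3P; split; apply/allrelP => e f.
- rewrite mem_before_seq (mem_cycle_order i_lt E_cycle) // => eB /andP[fC _].
  exact: (cw_before_before_cycle i_lt E_wf E_nc E_cycle).
- rewrite mem_before_seq mem_after_seq.
  exact: (cw_before_before_after E_wf).
- rewrite mem_after_seq (mem_cycle_order i_lt E_cycle) // => /andP[eC _].
  exact: (cw_before_cycle_after E_wf E_cycle).
Qed.

Lemma xprod_s j : (1 <= j <= m)%N ->
  xprod x (s j) = xprod x before_seq * xprod x (cycle_order m i j) * xprod x after_seq.
Proof.
move=> /[dup] hj /andP[j1 jm].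
rewrite (xprod_perm_cw x_comm _ (perm_ordered_seq hj)) ?pairwise_ordered_seq //.
- by rewrite /ordered_seq !xprod_cat mulrA.
- by apply/allP => e; rewrite mem_s // => /andP[/E_wf].
- exact: clockwise_order_pairwise (s_order j1 jm).
Qed.

End Factorization.

Theorem proposition3p5
  (n : nat) (A : algType rat) (x : 'I_n -> 'I_n -> A)
  (* the defining relations of the Fomin-Kirillov algebra E_n *)
  (Hanti : forall i j : 'I_n, i != j -> x i j = (- x j i)%R)
  (Hsq : forall i j : 'I_n, i != j -> (x i j * x i j = 0)%R)
  (Hcomm : forall i j k l : 'I_n, uniq [:: i; j; k; l] ->
             (x i j * x k l = x k l * x i j)%R)
  (Htri : forall i j k : 'I_n, uniq [:: i; j; k] ->
             (x i j * x j k + x j k * x k i + x k i * x i j = 0)%R)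
  (* the cycle i_1 < i_2 < ... < i_m *)
  (m : nat) (i : nat -> 'I_n)
  (Hinc : forall a b, (1 <= a)%N -> (a < b)%N -> (b <= m)%N -> (i a < i b)%N)
  (* the graph H *)
  (E : {set 'I_n * 'I_n})
  (Hwf : wf_edges E) (Hnc : noncrossing E) (Hconn : connected E)
  (Hcyc : unique_cycle E [seq i k | k <- iota 1 m])
  (* for each j, an admissible order s j of the edges of T_j *)
  (s : nat -> seq ('I_n * 'I_n))
  (Hs : forall j, (1 <= j)%N -> (j <= m)%N ->
          clockwise_order
            (E :\ (if j == 1%N then nedge (i 1%N) (i m) else nedge (i j.-1) (i j)))
            (s j)) :
  xprod x (s m) = (xprod x (s 1%N) - \sum_(2 <= j < m) xprod x (s j))%R.
Proof.
have hm := m_ge3 Hcyc; have xprod_s := xprod_s Hcomm Hinc Hwf Hnc Hcyc Hs.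
set b := xprod x (before_seq m i E s); set a := xprod x (after_seq m i E s).
have cyc_j j : (2 <= j <= m)%N ->
    xprod x (s j) = (b * (xpath x i j m * xchord x i m * xpath x i 1 j.-1) * a)%R.
  by move=> hj; rewrite xprod_s ?xprod_cycle_order //; lia.
rewrite cyc_j ?xprod_s ?xprod_cycle_order1; try lia.
rewrite (eq_big_nat _ _ (F2 := fun j =>
  (b * (xpath x i j m * xchord x i m * xpath x i 1 j.-1) * a)%R)); last first.
  by move=> j hj; apply: cyc_j; lia.
rewrite -mulr_suml -mulr_sumr -mulrBl -mulrBr.
rewrite -(xchord_xpath_identity Hanti Hcomm Htri Hinc) //.
by rewrite xpath_nil mul1r.
Qed.
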